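(* Let $a_1,a_2,a_3$ be the parameters of a pure three-mode Gaussian state in the standard form described below. Suppose that for every permutation $(i,j,k)$ of $(1,2,3)$, $$|a_i-a_j|+1<a_k<\sqrt{a_i^2+a_j^2-1}.$$ Then: (i) $a_k>\alpha_k$ for every $k=1,2,3$. (ii) For every choice of focus mode $i$, the residual tripartite Rényi-2 entanglement $$\mathcal E_2(\rho_{A_i:A_j:A_k})=\mathcal E_2(\rho_{A_i:A_jA_k})-\mathcal E_2(\rho_{A_i:A_j})-\mathcal E_2(\rho_{A_i:A_k})$$ equals $\tfrac12\ln\!\big(64a_1^2a_2^2a_3^2/\beta^2\big)$. In particular it does not depend on the choice of focus mode.
   Context: Any pure three-mode Gaussian state is, up to local unitaries, described by a covariance matrix $\boldsymbol\sigma_{A_1A_2A_3}$ in the following standard form. Its diagonal $2\times2$ blocks are $a_i\mathbf I$ for $i=1,2,3$. Its off-diagonal block between modes $A_j$ and $A_k$ is $\mathrm{diag}(c_i^+,c_i^-)$, where $\{i,j,k\}=\{1,2,3\}$. The coefficients are given by $$4\sqrt{a_ja_k}\,c_i^\pm=\sqrt{[(a_i-1)^2-(a_j-a_k)^2][(a_i+1)^2-(a_j-a_k)^2]}\pm\sqrt{[(a_i-1)^2-(a_j+a_k)^2][(a_i+1)^2-(a_j+a_k)^2]},$$ with $|a_j-a_k|+1\le a_i\le a_j+a_k-1$ for all permutations. The covariance matrix convention is $\sigma_{ij}=\langle \hat R_i\hat R_j+\hat R_j\hat R_i\rangle-2\langle\hat R_i\rangle\langle\hat R_j\rangle$. The Gaussian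 Rényi-2 entanglement is $\mathcal E_2(\rho_{X:Y})=\inf\tfrac12\ln\det\boldsymbol\gamma_X$. The infimum is over bona fide pure covariance matrices $\boldsymbol\gamma_{XY}$ (real symmetric, $\boldsymbol\gamma_{XY}+i\boldsymbol\Omega\ge0$, $\det\boldsymbol\gamma_{XY}=1$) with $\boldsymbol\gamma_{XY}\le\boldsymbol\sigma_{XY}$. For the pure state above, $\mathcal E_2(\rho_{A_i:A_jA_k})=\tfrac12\ln\det(a_i\mathbf I)=\ln a_i$. Known fact used as a standing input: the two-mode reduced entanglement is $\mathcal E_2(\rho_{A_i:A_j})=\tfrac12\ln g_k$, where - $g_k=1$ if $a_k\ge\sqrt{a_i^2+a_j^2-1}$; - $g_k=\beta/(8a_k^2)$ if $\alpha_k<a_k<\sqrt{a_i^2+a_j^2-1}$; - $g_k=\big((a_i^2-a_j^2)/(a_k^2-1)\big)^2$ if $a_k\le\alpha_k$. Here $$\alpha_k=\sqrt{\frac{2(a_i^2+a_j^2)+(a_i^2-a_j^2)^2+|a_i^2-a_j^2|\sqrt{(a_i^2-a_j^2)^2+8(a_i^2+a_j^2)}}{2(a_i^2+a_j^2)}},$$ $$\beta=2a_1^2+2a_2^2+2a_3^2+2a_1^2a_2^2+2a_1^2a_3^2+2a_2^2a_3^2-a_1^4-a_2^4-a_3^4-\sqrt\delta-1,$$ $$\delta=\prod_{\mu,\nu\in\{0,1\}}\big[(a_1+(-1)^\mu a_2+(-1)^\nu a_3)^2-1\big].$$ *)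

From Stdlib Require Import Reals Lra.
Open Scope R_scope.

(* Standard-form constraint for the local symplectic invariants of a pure
   three-mode Gaussian state: |a_j - a_k| + 1 <= a_i <= a_j + a_k - 1. *)
Definition sf_cond (ai aj ak : R) : Prop :=
  Rabs (aj - ak) + 1 <= ai /\ ai <= aj + ak - 1.

Definition standard_form (a1 a2 a3 : R) : Prop :=
  sf_cond a1 a2 a3 /\ sf_cond a2 a1 a3 /\ sf_cond a3 a1 a2 /\
  sf_cond a1 a3 a2 /\ sf_cond a2 a3 a1 /\ sf_cond a3 a2 a1.

(* alpha_k, with (i,j) the two other modes. *)
Definition alpha (ai aj : R) : R :=
  sqrt ((2 * (ai^2 + aj^2) + (ai^2 - aj^2)^2
         + Rabs (ai^2 - aj^2) * sqrt ((ai^2 - aj^2)^2 + 8 * (ai^2 + aj^2)))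
        / (2 * (ai^2 + aj^2))).

Definition delta (a1 a2 a3 : R) : R :=
  ((a1 + a2 + a3)^2 - 1) * ((a1 + a2 - a3)^2 - 1) *
  ((a1 - a2 + a3)^2 - 1) * ((a1 - a2 - a3)^2 - 1).

Definition beta (a1 a2 a3 : R) : R :=
  2*a1^2 + 2*a2^2 + 2*a3^2 + 2*a1^2*a2^2 + 2*a1^2*a3^2 + 2*a2^2*a3^2
  - a1^4 - a2^4 - a3^4 - sqrt (delta a1 a2 a3) - 1.

(* g_k for the reduced two-mode state of modes i, j (k = excluded mode). *)
Definition gk (ai aj ak : R) : R :=
  if Rle_dec (sqrt (ai^2 + aj^2 - 1)) ak then 1
  else if Rlt_dec (alpha ai aj) ak then beta ai aj ak / (8 * ak^2)
  else ((ai^2 - aj^2) / (ak^2 - 1))^2.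

(* E2(rho_{A_i:A_jA_k}) = ln a_i for the pure state. *)
Definition E2_one_two (ai : R) : R := ln ai.

(* E2(rho_{A_i:A_j}) = 1/2 ln g_k  (standing input), k the excluded mode. *)
Definition E2_pair (ai aj ak : R) : R := / 2 * ln (gk ai aj ak).

Definition E2_residual (ai aj ak : R) : R :=
  E2_one_two ai - E2_pair ai aj ak - E2_pair ai ak aj.

Definition hyp_cond (ai aj ak : R) : Prop :=
  Rabs (ai - aj) + 1 < ak /\ ak < sqrt (ai^2 + aj^2 - 1).

(* Under this hypothesis every two-mode reduction lies in the intermediate
   branch of g_k, i.e. g_k = beta / (8 a_k^2).  Two facts make this work:
   (1) a_k > alpha_k: squaring, alpha_k < a_k reduces to
       |d| sqrt (d^2 + 8 s) < 2 s (a_k^2 - 1) - d^2 with s = a_i^2 + a_j^2,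
       d = a_i^2 - a_j^2, which follows from the elementary bound
       sqrt (D^2 + 8 s) <= 2 s - D whenever s - D >= 2 ([radical_bound]);
   (2) beta > 0: beta = P - sqrt (P^2 - 64 a_1^2 a_2^2 a_3^2) with P > 0
       ([sub_sqrt_sq_pos]), the triangle conditions of the standard form
       making P positive.
   The residual entanglement then collapses by the logarithm laws
   ([ln_residual_identity]) to the value [residual_value], which is a
   symmetric function of (a_1, a_2, a_3), so it does not depend on the focus
   mode. *)

From Stdlib Require Import Reals Lra Psatz.
Open Scope R_scope.

Lemma sq_lt_of_lt_sqrt x t : 0 <= x -> x < sqrt t -> x^2 < t.
Proof.
  intros Hx Hlt.
  destruct (Rle_dec t 0) as [Ht | Ht].
  - rewrite sqrt_neg_0 in Hlt by exact Ht. lra.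
  - assert (Hsq := sqrt_sqrt t ltac:(lra)).
    assert (0 <= sqrt t) by apply sqrt_pos.
    nra.
Qed.

Lemma hyp_cond_sq x y z : hyp_cond x y z -> 1 < z /\ z^2 < x^2 + y^2 - 1.
Proof.
  intros [Hlow Hup].
  assert (0 <= Rabs (x - y)) by apply Rabs_pos.
  split; [lra | apply sq_lt_of_lt_sqrt; lra].
Qed.

Lemma radical_bound D s :
  0 <= D -> 2 <= s - D -> D * sqrt (D^2 + 8 * s) <= D * (2 * s - D).
Proof.
  intros HD Hs.
  apply Rmult_le_compat_l; [exact HD |].
  rewrite <- (sqrt_pow2 (2 * s - D)) by lra.
  apply sqrt_le_1_alt. nra.
Qed.

(* alpha x y < z as soon as x, y > 1 and |x^2 - y^2| < z^2 - 1, the latter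
   being stated as the two one-sided inequalities. *)
Lemma alpha_lt x y z :
  1 < x -> 1 < y -> 0 < z ->
  x^2 < y^2 + z^2 - 1 -> y^2 < x^2 + z^2 - 1 -> alpha x y < z.
Proof.
  intros Hx Hy Hz Hxz Hyz. unfold alpha.
  rewrite <- (pow2_abs (x^2 - y^2)).
  set (s := x^2 + y^2).
  set (D := Rabs (x^2 - y^2)).
  assert (HD0 : 0 <= D) by apply Rabs_pos.
  assert (HDz : D < z^2 - 1).
  { unfold D, Rabs; destruct (Rcase_abs (x^2 - y^2)); lra. }
  assert (HsD : 2 <= s - D).
  { unfold D, s, Rabs; destruct (Rcase_abs (x^2 - y^2)); nra. }
  assert (Hbound := radical_bound D s HD0 HsD).
  assert (Hr : 0 <= D * sqrt (D^2 + 8 * s))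
    by (apply Rmult_le_pos; [exact HD0 | apply sqrt_pos]).
  rewrite <- (sqrt_pow2 z) by lra.
  apply sqrt_lt_1_alt. split.
  - apply Rmult_le_pos; [nra | apply Rlt_le, Rinv_0_lt_compat; lra].
  - apply (Rmult_lt_reg_r (2 * s)); [lra |].
    unfold Rdiv. rewrite Rmult_assoc, Rinv_l, Rmult_1_r by lra.
    (* 2s + D^2 + D r < 2 s z^2, by D r <= D (2s - D) and D < z^2 - 1. *)
    nra.
Qed.

Lemma alpha_below x y z :
  hyp_cond x y z -> hyp_cond y z x -> hyp_cond x z y -> alpha x y < z.
Proof.
  intros Hxyz Hyzx Hxzy.
  destruct (hyp_cond_sq _ _ _ Hxyz) as [Hz _].
  destruct (hyp_cond_sq _ _ _ Hyzx) as [Hx Hx2].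
  destruct (hyp_cond_sq _ _ _ Hxzy) as [Hy Hy2].
  apply alpha_lt; lra.
Qed.

Lemma gk_intermediate x y z :
  hyp_cond x y z -> alpha x y < z -> gk x y z = beta x y z / (8 * z^2).
Proof.
  intros [_ Hup] Halpha. unfold gk.
  destruct (Rle_dec (sqrt (x^2 + y^2 - 1)) z); [lra |].
  destruct (Rlt_dec (alpha x y) z); [reflexivity | lra].
Qed.

Lemma beta_swap12 x y z : beta y x z = beta x y z.
Proof.
  assert (Hdelta : delta y x z = delta x y z) by (unfold delta; ring).
  unfold beta. rewrite Hdelta. ring.
Qed.

Lemma beta_swap23 x y z : beta x z y = beta x y z.
Proof.
  assert (Hdelta : delta x z y = delta x y z) by (unfold delta; ring).
  unfold beta. rewrite Hdelta. ring.
Qed.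

Lemma sub_sqrt_sq_pos P Q : 0 < P -> 0 < Q -> 0 < P - sqrt (P^2 - Q).
Proof.
  intros HP HQ.
  destruct (Rle_dec (P^2 - Q) 0) as [Hneg | Hpos].
  - rewrite sqrt_neg_0 by exact Hneg. lra.
  - assert (sqrt (P^2 - Q) < sqrt (P^2)) by (apply sqrt_lt_1_alt; lra).
    rewrite sqrt_pow2 in * by lra. lra.
Qed.

(* beta > 0 under the triangle conditions a_k <= a_i + a_j - 1 of the
   standard form: beta = P - sqrt (P^2 - 64 a^2 b^2 c^2) with P > 0. *)
Lemma beta_pos a b c :
  1 <= a + b - c -> 1 <= a - b + c -> 1 <= - a + b + c -> 0 < beta a b c.
Proof.
  intros Hc Hb Ha.
  set (P := (a + b + c) * (- a + b + c) * (a - b + c) * (a + b - c)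
            + 2 * (a^2 + b^2 + c^2) - 1).
  assert (Hprod : 0 < (a + b + c) * (- a + b + c) * (a - b + c) * (a + b - c))
    by (repeat apply Rmult_lt_0_compat; lra).
  assert (HP : 0 < P) by (unfold P; nra).
  assert (Habc : 0 < 64 * a^2 * b^2 * c^2)
    by (repeat apply Rmult_lt_0_compat; nra).
  assert (Hdelta : delta a b c = P^2 - 64 * a^2 * b^2 * c^2)
    by (unfold delta, P; ring).
  replace (beta a b c) with (P - sqrt (delta a b c)) by (unfold beta, P; ring).
  rewrite Hdelta. now apply sub_sqrt_sq_pos.
Qed.

Lemma ln_residual_identity a b g h :
  0 < a -> 0 < b -> 0 < g -> 0 < h ->
  ln a - / 2 * ln (b / (8 * g^2)) - / 2 * ln (b / (8 * h^2))
  = / 2 * ln (64 * a^2 * g^2 * h^2 / b^2).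
Proof.
  intros Ha Hb Hg Hh.
  assert (Hu : 0 < b / (8 * g^2)) by (apply Rdiv_lt_0_compat; nra).
  assert (Hv : 0 < b / (8 * h^2)) by (apply Rdiv_lt_0_compat; nra).
  replace (64 * a^2 * g^2 * h^2 / b^2)
    with (a^2 * (/ (b / (8 * g^2)) * / (b / (8 * h^2)))) by (field; lra).
  assert (0 < / (b / (8 * g^2))) by now apply Rinv_0_lt_compat.
  assert (0 < / (b / (8 * h^2))) by now apply Rinv_0_lt_compat.
  rewrite ln_mult, ln_mult, ln_Rinv, ln_Rinv, ln_pow
    by first [ assumption | apply pow_lt; assumption
             | apply Rmult_lt_0_compat; assumption ].
  simpl INR. lra.
Qed.

Definition residual_value (a1 a2 a3 : R) : R :=
  / 2 * ln (64 * a1^2 * a2^2 * a3^2 / (beta a1 a2 a3)^2).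

Lemma residual_value_swap12 x y z : residual_value y x z = residual_value x y z.
Proof.
  unfold residual_value. rewrite beta_swap12.
  now replace (64 * y^2 * x^2 * z^2) with (64 * x^2 * y^2 * z^2) by ring.
Qed.

Lemma residual_value_swap23 x y z : residual_value x z y = residual_value x y z.
Proof.
  unfold residual_value. rewrite beta_swap23.
  now replace (64 * x^2 * z^2 * y^2) with (64 * x^2 * y^2 * z^2) by ring.
Qed.

Lemma residual_formula x y z :
  0 < x -> hyp_cond x y z -> hyp_cond x z y ->
  alpha x y < z -> alpha x z < y -> 0 < beta x y z ->
  E2_residual x y z = residual_value x y z.
Proof.
  intros Hx Hxyz Hxzy Hz_alpha Hy_alpha Hbeta.
  destruct (hyp_cond_sq _ _ _ Hxyz) as [Hz _].
  destruct (hyp_cond_sq _ _ _ Hxzy) as [Hy _].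
  unfold E2_residual, E2_one_two, E2_pair, residual_value.
  rewrite (gk_intermediate _ _ _ Hxyz Hz_alpha),
          (gk_intermediate _ _ _ Hxzy Hy_alpha), (beta_swap23 x y z).
  rewrite ln_residual_identity by lra.
  now replace (64 * x^2 * z^2 * y^2) with (64 * x^2 * y^2 * z^2) by ring.
Qed.

Theorem mainTheorem8 (a1 a2 a3 : R) :
  standard_form a1 a2 a3 ->
  hyp_cond a1 a2 a3 -> hyp_cond a2 a1 a3 ->
  hyp_cond a1 a3 a2 -> hyp_cond a3 a1 a2 ->
  hyp_cond a2 a3 a1 -> hyp_cond a3 a2 a1 ->
  (a3 > alpha a1 a2 /\ a2 > alpha a1 a3 /\ a1 > alpha a2 a3) /\
  (E2_residual a1 a2 a3
     = / 2 * ln (64 * a1^2 * a2^2 * a3^2 / (beta a1 a2 a3)^2) /\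
   E2_residual a2 a1 a3
     = / 2 * ln (64 * a1^2 * a2^2 * a3^2 / (beta a1 a2 a3)^2) /\
   E2_residual a3 a1 a2
     = / 2 * ln (64 * a1^2 * a2^2 * a3^2 / (beta a1 a2 a3)^2)).
Proof.
  intros Hsf H123 H213 H132 H312 H231 H321.
  destruct Hsf as [[_ Hc1] [[_ Hc2] [[_ Hc3] _]]].
  assert (A12 := alpha_below _ _ _ H123 H231 H132).
  assert (A21 := alpha_below _ _ _ H213 H132 H231).
  assert (A13 := alpha_below _ _ _ H132 H321 H123).
  assert (A31 := alpha_below _ _ _ H312 H123 H321).
  assert (A23 := alpha_below _ _ _ H231 H312 H213).
  assert (A32 := alpha_below _ _ _ H321 H213 H312).
  fold (residual_value a1 a2 a3).
  split; [lra | split; [| split]].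
  - apply residual_formula; try assumption; [lra | apply beta_pos; lra].
  - rewrite <- residual_value_swap12.
    apply residual_formula; try assumption; [lra | apply beta_pos; lra].
  - rewrite <- residual_value_swap23, <- residual_value_swap12.
    apply residual_formula; try assumption; [lra | apply beta_pos; lra].
Qed.
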